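(* Let $\mathfrak{g}$ be a $\mathrm{Lie}$-nilpotent Leibniz algebra and $f:\mathfrak{g}\twoheadrightarrow\mathfrak{q}$ a surjective homomorphism of Leibniz algebras. If $\ker(f)\subseteq[\mathfrak{g},\mathfrak{g}]_{\mathrm{Lie}}$ and $\mathcal{M}^{\mathrm{Lie}}(\mathfrak{q})=0$, then $f$ is an isomorphism. In particular, if $\mathcal{M}^{\mathrm{Lie}}(\mathfrak{g}/[\mathfrak{g},\mathfrak{g}]_{\mathrm{Lie}})=0$, then $\mathcal{M}^{\mathrm{Lie}}(\mathfrak{g})=0$.
   Context: Fix a field $\mathbb{K}$ with $\frac12\in\mathbb{K}$. A Leibniz algebra is a $\mathbb{K}$-vector space with a bilinear bracket satisfying $[x,[y,z]]=[[x,y],z]-[[x,z],y]$. For two-sided ideals $\mathfrak{m},\mathfrak{n}$, $[\mathfrak{m},\mathfrak{n}]_{\mathrm{Lie}}$ is the subspace spanned by all $[m,n]+[n,m]$. Lower $\mathrm{Lie}$-central series: $\mathfrak{g}^{[1]}=\mathfrak{g}$, $\mathfrak{g}^{[i]}=[\mathfrak{g}^{[i-1]},\mathfrak{g}]_{\mathrm{Lie}}$; $\mathfrak{g}$ is $\mathrm{Lie}$-nilpotent if some $\mathfrak{g}^{[k]}=0$. For a free presentation $0\to\mathfrak{r}\to\mathfrak{f}\to\mathfrak{g}\to0$ ($\mathfrak{f}$ free Leibniz), $\mathcal{M}^{\mathrm{Lie}}(\mathfrak{g})=\frac{\mathfrak{r}\cap[\mathfrak{f},\mathfrak{f}]_{\mathrm{Lie}}}{[\mathfrak{f},\mathfrak{r}]_{\mathrm{Lie}}}$,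 independent of the presentation up to isomorphism. *)

From HB Require Import structures.
From mathcomp Require Import all_boot all_algebra.
Set Implicit Arguments. Unset Strict Implicit. Unset Printing Implicit Defensive.
Import GRing.Theory.
Local Open Scope ring_scope.

Record leibnizAlgebra (K : fieldType) := LeibnizAlgebra {
  lcarrier :> lmodType K;
  lbr : lcarrier -> lcarrier -> lcarrier;
  lbr_addl : forall x y z, lbr (x + y) z = lbr x z + lbr y z;
  lbr_addr : forall x y z, lbr x (y + z) = lbr x y + lbr x z;
  lbr_scalel : forall (a : K) x y, lbr (a *: x) y = a *: lbr x y;
  lbr_scaler : forall (a : K) x y, lbr x (a *: y) = a *: lbr x y;
  lbr_leibniz : forall x y z, lbr x (lbr y z) = lbr (lbr x y) z - lbr (lbr x z) y
}.
Arguments lbr {K} l x y.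

Section Defs.
Variable K : fieldType.

Definition is_subspace (A : leibnizAlgebra K) (W : A -> Prop) :=
  W 0 /\ forall (a : K) (x y : A), W x -> W y -> W (a *: x + y).

Definition span (A : leibnizAlgebra K) (S : A -> Prop) : A -> Prop :=
  fun x => forall W : A -> Prop, is_subspace W -> (forall y, S y -> W y) -> W x.

Definition fullset (A : leibnizAlgebra K) : A -> Prop := fun _ => True.
Arguments fullset : clear implicits.

Definition lie_br (A : leibnizAlgebra K) (M N : A -> Prop) : A -> Prop :=
  @span A (fun x => exists m n, M m /\ N n /\ x = lbr A m n + lbr A n m).

(* lower Lie-central series, shifted: lie_lcs A n = g^[n+1]. *)
Fixpoint lie_lcs (A : leibnizAlgebra K) (n : nat) : A -> Prop :=
  match n with
  | 0 => fullset A
  | n'.+1 => @lie_br A (@lie_lcs A n') (fullset A)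
  end.

Definition lie_nilpotent (A : leibnizAlgebra K) :=
  exists k, forall x : A, @lie_lcs A k x -> x = 0.

Definition is_hom (A B : leibnizAlgebra K) (h : A -> B) :=
  (forall (a : K) (x y : A), h (a *: x + y) = a *: h x + h y) /\
  (forall x y : A, h (lbr A x y) = lbr B (h x) (h y)).

Definition is_free_leibniz (F : leibnizAlgebra K) (X : Type) (i : X -> F) :=
  forall (B : leibnizAlgebra K) (phi : X -> B),
    exists h : F -> B, [/\ is_hom h, (forall x, h (i x) = phi x) &
      forall h' : F -> B, is_hom h' -> (forall x, h' (i x) = phi x) ->
        forall y, h' y = h y].

(* M^Lie(A) = 0: for a free presentation 0 -> r -> F -> A -> 0 (r = ker pi),
   (r ∩ [F,F]_Lie) / [F,r]_Lie = 0, i.e. r ∩ [F,F]_Lie ⊆ [F,r]_Lie.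
   Since M^Lie is independent of the presentation, we require it for every
   free presentation. *)
Definition MLie_zero (A : leibnizAlgebra K) :=
  forall (F : leibnizAlgebra K) (X : Type) (i : X -> F) (pi : F -> A),
    is_free_leibniz i -> is_hom pi -> (forall a : A, exists y, pi y = a) ->
    forall y : F, pi y = 0 -> lie_br (fullset F) (fullset F) y ->
      lie_br (fullset F) (fun r => pi r = 0) y.

End Defs.
Arguments fullset {K} A _.

(** The kernel of [f] reproduces itself under the Lie bracket: present [q]
    through a free Leibniz algebra [F] mapping onto [g].  An element [x] of
    [ker f] lies in [[g,g]_Lie], so it lifts to some [y] in [[F,F]_Lie] which
    is a relation of the presentation [F -> g -> q]; as [M^Lie(q) = 0], [y]
    lies in [[F, r]_Lie], and pushing back to [g] gives
    [ker f <= [g, ker f]_Lie].  Iterating, [ker f] lies in every term of the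
    lower Lie-central series, hence vanishes. *)

From Pilot Require Import Defs.
From HB Require Import structures.
From mathcomp Require Import all_boot all_algebra finmap.
From mathcomp.multinomials Require Import monalg.
Set Implicit Arguments. Unset Strict Implicit. Unset Printing Implicit Defensive.
Import GRing.Theory.
Local Open Scope ring_scope.

Section LinearMaps.
Variables (K : fieldType) (U V : lmodType K) (f : U -> V).
Hypothesis f_linear : linear f.
#[local] HB.instance Definition _ := GRing.isLinear.Build K U V *:%R f f_linear.

Lemma linear_map0 : f 0 = 0. Proof. exact: raddf0. Qed.
Lemma linear_mapD x y : f (x + y) = f x + f y. Proof. exact: raddfD. Qed.
Lemma linear_mapB x y : f (x - y) = f x - f y. Proof. exact: raddfB. Qed.
Lemma linear_mapZ a x : f (a *: x) = a *: f x. Proof. exact: linearZ. Qed.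
Lemma linear_map_sum (I : Type) (s : seq I) (F : I -> U) :
  f (\sum_(i <- s) F i) = \sum_(i <- s) f (F i).
Proof. exact: raddf_sum. Qed.
End LinearMaps.

Lemma linear_comp (K : fieldType) (U V Y : lmodType K) (f : V -> Y) (g : U -> V) :
  linear f -> linear g -> linear (fun u => f (g u)).
Proof. by move=> fL gL a x y; rewrite gL fL. Qed.

Lemma linear_sub (K : fieldType) (U V : lmodType K) (f g : U -> V) :
  linear f -> linear g -> linear (fun u => f u - g u).
Proof.
move=> fL gL a x y; rewrite fL gL scalerBr opprD !addrA.
by congr (_ + _); rewrite addrAC.
Qed.

Section FreeLeibnizAlgebra.
Variables (K : fieldType) (X : choiceType).

(* [(x, [:: y1; ..; yn])] encodes the left-normed word [(..((x y1) y2) ..) yn]. *)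
Definition word := (X * seq X)%type.
Definition rcons_word (w : word) (y : X) : word := (w.1, rcons w.2 y).

Definition free_space := {malg K[word]}.
Definition basis (w : word) : free_space := << w >>.

Definition lin_ext (V : lmodType K) (phi : word -> V) (v : free_space) : V :=
  \sum_(w <- msupp v) v@_w *: phi w.

Section LinearExtension.
Variables (V : lmodType K) (phi : word -> V).

Lemma lin_extEw (d : {fset word}) v : (msupp v `<=` d)%fset ->
  lin_ext phi v = \sum_(w <- d) v@_w *: phi w.
Proof.
move=> le_vd; rewrite /lin_ext (big_fset_incl _ le_vd) // => w _ /mcoeff_outdom->.
by rewrite scale0r.
Qed.

Lemma lin_ext_linear : linear (lin_ext phi).
Proof.
move=> a u v; pose d := (msupp u `|` msupp v)%fset.
have le_uvd : (msupp (a *: u + v) `<=` d)%fset.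
  exact: fsubset_trans (msuppD_le _ _) (fsetSU _ (msuppZ_le _ _)).
rewrite (lin_extEw le_uvd) (@lin_extEw d u (fsubsetUl _ _)).
rewrite (@lin_extEw d v (fsubsetUr _ _)) scaler_sumr -big_split /=.
by apply: eq_bigr => w _; rewrite mcoeffD mcoeffZ scalerDl scalerA.
Qed.

Lemma lin_ext_basis w : lin_ext phi (basis w) = phi w.
Proof. by rewrite (lin_extEw msuppU_le) big_seq_fset1 mcoeffUU scale1r. Qed.
End LinearExtension.

Lemma linear_free_eq (V : lmodType K) (f g : free_space -> V) :
  linear f -> linear g -> (forall w, f (basis w) = g (basis w)) -> f =1 g.
Proof.
move=> fL gL fg v; rewrite (monalgE v) (linear_map_sum fL) (linear_map_sum gL).
apply: eq_bigr => w _.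
have -> : << v@_w *g w >> = v@_w *: basis w.
  by apply/malgP => k; rewrite mcoeffZ !mcoeffU mulr_natr.
by rewrite (linear_mapZ fL) (linear_mapZ gL) fg.
Qed.

Definition right_gen (y : X) : free_space -> free_space :=
  lin_ext (fun w => basis (rcons_word w y)).

(* Right multiplication by the word [w]: the Leibniz identity says right
   multiplications are derivations, so [R_(w y) = R_y R_w - R_w R_y]. *)
Definition right_word (w : word) : free_space -> free_space :=
  foldl (fun R y u => right_gen y (R u) - R (right_gen y u)) (right_gen w.1) w.2.

Definition free_br (u v : free_space) : free_space :=
  lin_ext (fun w => right_word w u) v.

Lemma right_gen_linear y : linear (right_gen y). Proof. exact: lin_ext_linear. Qed.

Lemma right_gen_basis y w : right_gen y (basis w) = basis (rcons_word w y).
Proof. exact: lin_ext_basis. Qed.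

Lemma right_word_linear w : linear (right_word w).
Proof.
rewrite /right_word; elim: w.2 (right_gen w.1) (right_gen_linear w.1) => //= y s IH R RL.
apply: IH; apply: linear_sub; first exact: linear_comp (right_gen_linear y) RL.
exact: linear_comp RL (right_gen_linear y).
Qed.

Lemma right_word_rcons w y u :
  right_word (rcons_word w y) u =
    right_gen y (right_word w u) - right_word w (right_gen y u).
Proof. by rewrite /right_word /= foldl_rcons. Qed.

Lemma free_br_basis u w : free_br u (basis w) = right_word w u.
Proof. exact: lin_ext_basis. Qed.

Lemma free_br_linear_r u : linear (free_br u). Proof. exact: lin_ext_linear. Qed.

Lemma free_br_linear_l v : linear (free_br ^~ v).
Proof.
move=> a x y; rewrite /free_br /lin_ext scaler_sumr -big_split /=.
by apply: eq_bigr => w _; rewrite right_word_linear scalerDr !scalerA mulrC.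
Qed.

Lemma leibniz_right_gen u v y :
  free_br u (right_gen y v) = right_gen y (free_br u v) - free_br (right_gen y u) v.
Proof.
apply: (linear_free_eq (linear_comp (free_br_linear_r u) (right_gen_linear y))
  (linear_sub (linear_comp (right_gen_linear y) (free_br_linear_r u))
              (free_br_linear_r _))) => w.
by rewrite right_gen_basis !free_br_basis right_word_rcons.
Qed.

Lemma leibniz_right_word u v w :
  free_br u (right_word w v) = right_word w (free_br u v) - free_br (right_word w u) v.
Proof.
case: w => x s; elim/last_ind: s u v => [|s y IH] u v; first exact: leibniz_right_gen.
have -> : (x, rcons s y) = rcons_word (x, s) y by [].
have RL := right_word_linear (x, s); have RyL := right_gen_linear y.
rewrite !right_word_rcons (linear_mapB (free_br_linear_r u)) !leibniz_right_gen !IH.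
rewrite !leibniz_right_gen (linear_mapB RyL) (linear_mapB RL).
rewrite !(linear_mapB (free_br_linear_l v)) !opprB !addrA.
by rewrite [LHS](@GRing.add free_space).[ACl (2*5)*(4*7)*1*8*3*6] !addNr addr0 add0r.
Qed.

Lemma free_br_leibniz u v z :
  free_br u (free_br v z) = free_br (free_br u v) z - free_br (free_br u z) v.
Proof.
apply: (linear_free_eq (linear_comp (free_br_linear_r u) (free_br_linear_r v))
  (linear_sub (free_br_linear_r _)
              (linear_comp (free_br_linear_l v) (free_br_linear_r u)))) => w.
by rewrite !free_br_basis leibniz_right_word.
Qed.

Definition free_leibniz : leibnizAlgebra K :=
  @LeibnizAlgebra K free_space free_br
    (fun x y z => linear_mapD (free_br_linear_l z) x y)
    (fun x y z => linear_mapD (free_br_linear_r x) y z)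
    (fun a x y => linear_mapZ (free_br_linear_l y) a x)
    (fun a x y => linear_mapZ (free_br_linear_r x) a y)
    free_br_leibniz.

Definition free_gen (x : X) : free_leibniz := basis (x, [::]).

Section UniversalProperty.
Variables (B : leibnizAlgebra K) (phi : X -> B).

Definition word_eval (w : word) : B := foldl (fun b y => lbr B b (phi y)) (phi w.1) w.2.
Definition free_eval : free_space -> B := lin_ext word_eval.

Lemma lbr_linear_r (b : B) : linear (lbr B b).
Proof. by move=> a x y; rewrite lbr_addr lbr_scaler. Qed.

Lemma lbr_linear_l (b : B) : linear (lbr B ^~ b).
Proof. by move=> a x y; rewrite lbr_addl lbr_scalel. Qed.

Lemma free_eval_linear : linear free_eval. Proof. exact: lin_ext_linear. Qed.

Lemma word_eval_rcons w y : word_eval (rcons_word w y) = lbr B (word_eval w) (phi y).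
Proof. by rewrite /word_eval /= foldl_rcons. Qed.

Lemma free_eval_right_gen y u : free_eval (right_gen y u) = lbr B (free_eval u) (phi y).
Proof.
apply: (linear_free_eq (linear_comp free_eval_linear (right_gen_linear y))
  (linear_comp (lbr_linear_l _) free_eval_linear)) => w.
by rewrite right_gen_basis /free_eval !lin_ext_basis word_eval_rcons.
Qed.

Lemma free_eval_right_word w u :
  free_eval (right_word w u) = lbr B (free_eval u) (word_eval w).
Proof.
case: w => x s; elim/last_ind: s u => [|s y IH] u; first exact: free_eval_right_gen.
have -> : (x, rcons s y) = rcons_word (x, s) y by [].
rewrite right_word_rcons (linear_mapB free_eval_linear) !free_eval_right_gen !IH.
by rewrite free_eval_right_gen word_eval_rcons lbr_leibniz.
Qed.

Lemma free_eval_hom : is_hom (free_eval : free_leibniz -> B).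
Proof.
split=> [|u]; first exact: free_eval_linear.
apply: (linear_free_eq (linear_comp free_eval_linear (free_br_linear_r u))
  (linear_comp (lbr_linear_r _) free_eval_linear)) => w.
by rewrite free_br_basis free_eval_right_word /free_eval lin_ext_basis.
Qed.

Lemma free_eval_gen x : free_eval (free_gen x) = phi x.
Proof. exact: lin_ext_basis. Qed.

Lemma free_eval_unique (h : free_leibniz -> B) :
  is_hom h -> (forall x, h (free_gen x) = phi x) -> h =1 free_eval.
Proof.
move=> [hL h_br] h_gen; apply: linear_free_eq hL free_eval_linear _ => -[x s].
rewrite /free_eval lin_ext_basis; elim/last_ind: s => [|s y IH]; first exact: h_gen.
have -> : basis (x, rcons s y) = free_br (basis (x, s)) (free_gen y).
  by rewrite free_br_basis /right_word /= right_gen_basis.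
by rewrite (h_br (basis (x, s)) (free_gen y)) IH h_gen -word_eval_rcons.
Qed.
End UniversalProperty.

Lemma free_leibniz_free : is_free_leibniz free_gen.
Proof.
move=> B phi; exists (free_eval phi); split.
- exact: free_eval_hom.
- exact: free_eval_gen.
- by move=> h hH h_gen y; apply: free_eval_unique.
Qed.
End FreeLeibnizAlgebra.

Section Spans.
Variables (K : fieldType) (A : leibnizAlgebra K).

Lemma span_subspace (S : A -> Prop) : is_subspace (Defs.span S).
Proof.
split=> [W [] //|a x y Sx Sy W WW WS].
by case: (WW) => _ W_comb; apply: W_comb; [apply: Sx | apply: Sy].
Qed.

Lemma span_gen (S : A -> Prop) x : S x -> Defs.span S x.
Proof. by move=> Sx W _; apply. Qed.

Lemma span_ind (S W : A -> Prop) :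
  is_subspace W -> (forall x, S x -> W x) -> forall x, Defs.span S x -> W x.
Proof. by move=> WW WS x; apply. Qed.

Lemma lie_br_mono (M N M' N' : A -> Prop) :
  (forall x, M x -> M' x) -> (forall x, N x -> N' x) ->
  forall x, lie_br M N x -> lie_br M' N' x.
Proof.
move=> MM' NN'; apply: span_ind; first exact: span_subspace.
move=> _ [m [n [Mm [Nn ->]]]]; apply: span_gen.
by exists m, n; split; [apply: MM' | split; [apply: NN'|]].
Qed.

Lemma lie_brC (M N : A -> Prop) x : lie_br M N x -> lie_br N M x.
Proof.
apply: span_ind x; first exact: span_subspace.
move=> _ [m [n [Mm [Nn ->]]]]; apply: span_gen.
by exists n, m; do 2!split => //; rewrite addrC.
Qed.
End Spans.

Section Homomorphisms.
Variables (K : fieldType) (A B : leibnizAlgebra K) (p : A -> B).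
Hypothesis p_hom : is_hom p.

Lemma hom_linear : linear p. Proof. by case: p_hom. Qed.
Lemma hom_br x y : p (lbr A x y) = lbr B (p x) (p y). Proof. by case: p_hom. Qed.

Lemma hom_span (S : A -> Prop) (W : B -> Prop) :
  is_subspace W -> (forall a, S a -> W (p a)) -> forall a, Defs.span S a -> W (p a).
Proof.
move=> [W0 W_comb] SW; apply: span_ind => //.
split=> [|c x y Wx Wy]; first by rewrite (linear_map0 hom_linear).
by rewrite hom_linear; apply: W_comb.
Qed.

Lemma span_lift (S : A -> Prop) (T : B -> Prop) :
  (forall b, T b -> exists2 a, S a & p a = b) ->
  forall b, Defs.span T b -> exists2 a, Defs.span S a & p a = b.
Proof.
move=> TS; apply: span_ind.
  split=> [|c _ _ [x Sx <-] [y Sy <-]].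
    by exists 0; [case: (span_subspace S) | exact: linear_map0 hom_linear].
  exists (c *: x + y); last exact: hom_linear.
  by case: (span_subspace S) => _; apply.
by move=> b /TS [a Sa <-]; exists a; first exact: span_gen.
Qed.

Lemma hom_lie_br (M N : A -> Prop) (M' N' : B -> Prop) :
  (forall m, M m -> M' (p m)) -> (forall n, N n -> N' (p n)) ->
  forall x, lie_br M N x -> lie_br M' N' (p x).
Proof.
move=> MM' NN'; apply: hom_span; first exact: span_subspace.
move=> _ [m [n [Mm [Nn ->]]]]; apply: span_gen; exists (p m), (p n).
by rewrite (linear_mapD hom_linear) !hom_br; split; [apply: MM' | split; [apply: NN'|]].
Qed.

Lemma lie_br_lift (M N : A -> Prop) (M' N' : B -> Prop) :
  (forall b, M' b -> exists2 a, M a & p a = b) ->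
  (forall b, N' b -> exists2 a, N a & p a = b) ->
  forall b, lie_br M' N' b -> exists2 a, lie_br M N a & p a = b.
Proof.
move=> MM' NN'; apply: span_lift => _ [_ [_ [/MM' [m Mm <-] [/NN' [n Nn <-] ->]]]].
exists (lbr A m n + lbr A n m); first by exists m, n.
by rewrite (linear_mapD hom_linear) !hom_br.
Qed.

Lemma hom_injective : (forall x, p x = 0 -> x = 0) -> injective p.
Proof.
move=> ker0 x y pxy; apply/eqP; rewrite -subr_eq0; apply/eqP/ker0.
by rewrite (linear_mapB hom_linear) pxy subrr.
Qed.
End Homomorphisms.

Lemma hom_comp (K : fieldType) (A B C : leibnizAlgebra K) (f : B -> C) (p : A -> B) :
  is_hom f -> is_hom p -> is_hom (fun x => f (p x)).
Proof.
move=> [fL f_br] [pL p_br]; split=> [|x y]; first exact: linear_comp.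
by rewrite p_br f_br.
Qed.

Lemma inj_surj_bijective (T : choiceType) (U : eqType) (f : T -> U) :
  injective f -> (forall b, exists a, f a = b) -> bijective f.
Proof.
move=> f_inj f_surj; have f_surjb b : exists a, f a == b.
  by have [a <-] := f_surj b; exists a.
exists (fun b => xchoose (f_surjb b)) => [a|b]; last exact/eqP/(xchooseP (f_surjb b)).
by apply: f_inj; apply/eqP/(xchooseP (f_surjb (f a))).
Qed.

Section StemCovers.
Variable K : fieldType.

Lemma ker_sub_lie_br_ker (g q : leibnizAlgebra K) (f : g -> q) :
  is_hom f -> (forall b, exists a, f a = b) ->
  (forall x, f x = 0 -> lie_br (fullset g) (fullset g) x) ->
  MLie_zero q ->
  forall x, f x = 0 -> lie_br (fullset g) (fun n => f n = 0) x.
Proof.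
move=> f_hom f_surj ker_f M_q x fx0.
pose p : free_leibniz K g -> g := free_eval id; have p_hom : is_hom p := free_eval_hom id.
have p_gen (a : g) : exists2 y, fullset _ y & p y = a.
  by exists (free_gen K a); last exact: free_eval_gen.
have pi_surj b : exists y, f (p y) = b.
  by have [a <-] := f_surj b; have [y _ <-] := p_gen a; exists y.
have [y y_br pyx] :=
  lie_br_lift p_hom (fun b _ => p_gen b) (fun b _ => p_gen b) (ker_f x fx0).
rewrite -pyx in fx0 *.
have := M_q _ _ _ _ (@free_leibniz_free K g) (hom_comp f_hom p_hom) pi_surj y fx0 y_br.
exact: hom_lie_br.
Qed.

Lemma lie_lcs_sub (g : leibnizAlgebra K) (N : g -> Prop) :
  (forall x, N x -> lie_br (fullset g) N x) -> forall n x, N x -> lie_lcs n x.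
Proof.
move=> N_br; elim=> [//|n IH] x /N_br Nx /=.
by apply: lie_brC; apply: lie_br_mono Nx.
Qed.

Lemma stem_cover_bijective (g q : leibnizAlgebra K) (f : g -> q) :
  lie_nilpotent g -> is_hom f -> (forall b, exists a, f a = b) ->
  (forall x, f x = 0 -> lie_br (fullset g) (fullset g) x) ->
  MLie_zero q -> bijective f.
Proof.
move=> [k lcs_k0] f_hom f_surj ker_f M_q.
apply: (inj_surj_bijective _ f_surj); apply: (hom_injective f_hom) => x fx0.
by apply/lcs_k0/(lie_lcs_sub (ker_sub_lie_br_ker f_hom f_surj ker_f M_q)).
Qed.

Lemma MLie_zero_iso (g q : leibnizAlgebra K) (f : g -> q) :
  is_hom f -> bijective f -> MLie_zero q -> MLie_zero g.
Proof.
move=> f_hom f_bij M_q F X i pi F_free pi_hom pi_surj y piy0 y_br.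
have f_inj := bij_inj f_bij; have f0 := linear_map0 (hom_linear f_hom).
have fpi_surj b : exists z, f (pi z) = b.
  have [f' _ ff'] := f_bij; have [z piz] := pi_surj (f' b).
  by exists z; rewrite piz ff'.
have fpiy0 : f (pi y) = 0 by rewrite piy0.
have := M_q F X i _ F_free (hom_comp f_hom pi_hom) fpi_surj y fpiy0 y_br.
apply: lie_br_mono => // r.
by rewrite -f0 => /f_inj.
Qed.
End StemCovers.

Theorem mainTheorem10 (K : fieldType) (half : (2%:R : K) != 0) :
  (forall (g q : leibnizAlgebra K) (f : g -> q),
     lie_nilpotent g -> is_hom f -> (forall b : q, exists a, f a = b) ->
     (forall x : g, f x = 0 -> lie_br (fullset g) (fullset g) x) ->
     MLie_zero q ->
     bijective f)
  /\
  (forall (g q : leibnizAlgebra K) (f : g -> q),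
     lie_nilpotent g -> is_hom f -> (forall b : q, exists a, f a = b) ->
     (forall x : g, f x = 0 <-> lie_br (fullset g) (fullset g) x) ->
     MLie_zero q ->
     MLie_zero g).
Proof.
(* The argument never divides by 2. *)
split=> [|g q f g_nil f_hom f_surj ker_f M_q]; first exact: stem_cover_bijective.
apply: (MLie_zero_iso f_hom _ M_q).
by apply: stem_cover_bijective => // x /ker_f.
Qed.
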